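(* Let $N=2^L$ ($L\ge1$), channel numbers $r_0,\dots,r_{L-1}\ge1$, an output index $y$, and pairwise distinct covering templates $\mathbf x^{(1)},\dots,\mathbf x^{(M)}\in\mathbb R^s$ be given. Suppose all parameters of the deep ConvNet with ReLU activation and max pooling (representation parameters $\theta_1,\dots,\theta_M\in\Theta$ and all linear weights) are drawn from a distribution with a continuous, nowhere-vanishing probability density function. Then with positive probability the resulting score function $h^D_y$ can be realized by a shallow ConvNet with linear activation and product pooling having a single hidden channel ($Z=1$), i.e. there exist $f_{\tilde\theta_1},\dots,f_{\tilde\theta_M}\in\mathcal F$ and weights for this shallow ConvNet with $\mathcal A(h^S_y)=\mathcal A(h^D_y)$.
   Context: Inputs are $X=(\mathbf x_1,\dots,\mathbf x_N)\in(\mathbb R^s)^N$. Representation functions come from a family $\mathcal F=\{f_\theta:\mathbb R^s\to\mathbb R:\theta\in\Theta\}$, $\Theta$ an open subset of a Euclidean space, assumed throughout to satisfy: (continuity) $f_\theta(\mathbf x)$ continuous in $\theta$ and $\mathbf x$; (non-degeneracy) for any pairwise distinct $\mathbf x^{(1)},\dots,\mathbf x^{(M)}$ there exist $f_{\theta_1},\dots,f_{\theta_M}\in\mathcal F$ with $(f_{\theta_d}(\mathbf x^{(i)}))_{i,d}$ non-singular. Linear activation with product pooling: $\sigma(z)=z$, $P=$ product. ReLU activation with max pooling: $\sigma(z)=\max\{0,z\}$, $P=\max$. Shallow ConvNet (activation $\sigma$, pooling $P$, $Z$ hidden channels): $h^S_y(X)=\sum_{z=1}^Z a^y_z\,P_{i\in[N]}\big(\sigma(\sum_{d=1}^M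 a^{z,i}_d f_{\theta_d}(\mathbf x_i))\big)$. Deep ConvNet (activation $\sigma$, pooling $P$): with $f_{\theta_d}\in\mathcal F$, $\mathbf a^{0,j,\gamma}\in\mathbb R^M$ ($j\in[N],\gamma\in[r_0]$), $\mathbf a^{l,j,\gamma}\in\mathbb R^{r_{l-1}}$ ($l\in[L-1]$, $j\in[N/2^l]$, $\gamma\in[r_l]$), $\mathbf a^{L,1,y}\in\mathbb R^{r_{L-1}}$: $u^0_{j,\gamma}=\sigma(\sum_d a^{0,j,\gamma}_d f_{\theta_d}(\mathbf x_j))$; for $l=0,\dots,L-1$, $v^l_{j,\gamma}=P(u^l_{2j-1,\gamma},u^l_{2j,\gamma})$ ($j\in[N/2^{l+1}]$), for $l\ge1$, $u^l_{j,\gamma}=\sigma(\sum_\alpha a^{l,j,\gamma}_\alpha v^{l-1}_{j,\alpha})$ ($j\in[N/2^l]$); $h^D_y(X)=\sum_\alpha a^{L,1,y}_\alpha v^{L-1}_{1,\alpha}$. Grid tensor: $\mathcal A(h)_{d_1,\dots,d_N}=h(\mathbf x^{(d_1)},\dots,\mathbf x^{(d_N)})$. Templates are covering if score functions are identified whenever their grid tensors coincide. *)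

From HB Require Import structures.
From mathcomp Require Import all_boot all_order all_algebra.
From mathcomp Require Import all_classical all_reals all_analysis.
Set Implicit Arguments.
Unset Strict Implicit.
Unset Printing Implicit Defensive.
Import Order.TTheory GRing.Theory Num.Theory.
Local Open Scope ring_scope.
Local Open Scope classical_set_scope.

Section Defs.
Variable R : realType.

Definition open_set n (O : set ('I_n -> R)) : Prop :=
  forall t, O t -> exists2 d : R, 0 < d &
    forall t', (forall k, `|t' k - t k| < d) -> O t'.

Definition cont_on (I : finType) (O : set (I -> R)) (rho : (I -> R) -> R) :=
  forall p, O p -> forall e : R, 0 < e -> exists2 d : R, 0 < d &
    forall q, O q -> (forall i, `|q i - p i| < d) -> `|rho q - rho p| < e.

Definition family_continuous P s (Theta : set ('I_P -> R))
    (f : ('I_P -> R) -> ('I_s -> R) -> R) : Prop :=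
  forall t x, Theta t -> forall e : R, 0 < e -> exists2 d : R, 0 < d &
    forall t' x', Theta t' -> (forall k, `|t' k - t k| < d) ->
      (forall k, `|x' k - x k| < d) -> `|f t' x' - f t x| < e.

Definition family_nondegenerate P s (Theta : set ('I_P -> R))
    (f : ('I_P -> R) -> ('I_s -> R) -> R) : Prop :=
  forall (n : nat) (xs : 'I_n -> ('I_s -> R)), injective xs ->
    exists th : 'I_n -> ('I_P -> R), (forall k, Theta (th k)) /\
      \det (\matrix_(i < n, k < n) f (th k) (xs i)) != 0.

Definition relu (z : R) : R := Num.max 0 z.

(* Indices are 0-based: u l j g = u^l_{j+1,g+1}; pooling v^l_j = max(u^l_{2j}, u^l_{2j+1}).
   a0 j g d = a^{0,j,g}_d ; a l j g al = a^{l,j,g}_al (l >= 1) ; aL y al = a^{L,1,y}_al. *)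
Fixpoint deep_u M s P (r : nat -> nat) (f : ('I_P -> R) -> ('I_s -> R) -> R)
    (th : 'I_M -> ('I_P -> R)) (a0 : nat -> nat -> nat -> R)
    (a : nat -> nat -> nat -> nat -> R) (X : nat -> ('I_s -> R)) (l : nat)
    : nat -> nat -> R :=
  match l with
  | 0 => fun j g => relu (\sum_(d < M) a0 j g d * f (th d) (X j))
  | l'.+1 => fun j g =>
      relu (\sum_(al < r l')
              a l'.+1 j g al *
              Num.max (deep_u r f th a0 a X l' j.*2 al)
                      (deep_u r f th a0 a X l' j.*2.+1 al))
  end.

Definition deep_h M s P L (r : nat -> nat) (f : ('I_P -> R) -> ('I_s -> R) -> R)
    (th : 'I_M -> ('I_P -> R)) (a0 : nat -> nat -> nat -> R)
    (a : nat -> nat -> nat -> nat -> R) (aL : nat -> nat -> R) (y : nat)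
    (X : nat -> ('I_s -> R)) : R :=
  \sum_(al < r L.-1) aL y al *
     Num.max (deep_u r f th a0 a X L.-1 0 al) (deep_u r f th a0 a X L.-1 1 al).

Definition shallow1_h M s P N (f : ('I_P -> R) -> ('I_s -> R) -> R)
    (th : 'I_M -> ('I_P -> R)) (c : R) (b : 'I_N -> 'I_M -> R)
    (X : nat -> ('I_s -> R)) : R :=
  c * \prod_(i < N) (\sum_(d < M) b i d * f (th d) (X i)).

(* grid tensor entry A(h)_{d_1..d_N} = h(x^(d_1),...,x^(d_N)) ; inputs X as nat-indexed *)
Definition grid_input M s N (xs : 'I_M -> ('I_s -> R)) (ds : 'I_N -> 'I_M)
    : nat -> ('I_s -> R) :=
  fun j => match insub j : option 'I_N with
           | Some j' => xs (ds j') | None => fun _ => 0 end.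

(* coordinates: theta_d's coordinates; layer-0 weights (j,g,d);
   layer l+1 weights (1 <= l+1 <= L-1) (j,g,al); output weights (y,al). *)
Definition PIdx (M P N L Y : nat) (r : nat -> nat) : finType :=
  (('I_M * 'I_P) + ('I_N * 'I_(r 0) * 'I_M)
   + {l : 'I_L.-1 & ('I_(N %/ 2 ^ l.+1) * 'I_(r l.+1) * 'I_(r l))%type}
   + ('I_Y * 'I_(r L.-1)))%type.

Section Decode.
Variables (M P N L Y : nat) (r : nat -> nat).
Variable p : PIdx M P N L Y r -> R.

Definition dec_theta : 'I_M -> ('I_P -> R) :=
  fun d k => p (inl (inl (inl (d, k)))).
Definition dec_a0 : nat -> nat -> nat -> R := fun j g d =>
  match insub j : option 'I_N, insub g : option 'I_(r 0), insub d : option 'I_M with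
  | Some j', Some g', Some d' => p (inl (inl (inr (j', g', d'))))
  | _, _, _ => 0 end.
Definition dec_a : nat -> nat -> nat -> nat -> R := fun l j g al =>
  match l with
  | 0 => 0
  | l'.+1 =>
    match insub l' : option 'I_L.-1 with
    | Some lo =>
      match insub j : option 'I_(N %/ 2 ^ lo.+1), insub g : option 'I_(r lo.+1),
            insub al : option 'I_(r lo) with
      | Some j', Some g', Some al' =>
          p (inl (inr (existT (fun l0 : 'I_L.-1 =>
               ('I_(N %/ 2 ^ l0.+1) * 'I_(r l0.+1) * 'I_(r l0))%type) lo (j', g', al'))))
      | _, _, _ => 0 end
    | None => 0 end
  end.
Definition dec_aL : nat -> nat -> R := fun y al =>
  match insub y : option 'I_Y, insub al : option 'I_(r L.-1) with
  | Some y', Some al' => p (inr (y', al'))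
  | _, _ => 0 end.
End Decode.

Definition upd (I : finType) (q : I -> R) (i : I) (x : R) : I -> R :=
  fun j => if j == i then x else q j.

(* iterated Lebesgue integral over all coordinates of I (Tonelli: = integral
   against the product Lebesgue measure for nonnegative measurable g) *)
Fixpoint iint_seq (I : finType) (sq : seq I) (g : (I -> R) -> \bar R) (q : I -> R)
    : \bar R :=
  match sq with
  | [::] => g q
  | i :: sq' => (\int[@lebesgue_measure R]_x iint_seq sq' g (upd q i x))%E
  end.
Definition iint (I : finType) (g : (I -> R) -> \bar R) : \bar R :=
  iint_seq (enum I) g (fun _ => 0).

Definition pmeasurable (I : finType) (A : set (I -> R)) : Prop :=
  g_sigma_preimage (fun (k : 'I_#|I|) (q : I -> R) => q (enum_val k)) A.

Definition dprob (I : finType) (Omega : set (I -> R)) (rho : (I -> R) -> R)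
    (A : set (I -> R)) : \bar R :=
  iint (fun q => (\1_(A `&` Omega) q * rho q)%:E).

Definition cont_pos_density (I : finType) (Omega : set (I -> R))
    (rho : (I -> R) -> R) : Prop :=
  [/\ forall q, Omega q -> 0 < rho q,
      cont_on Omega rho &
      iint (fun q => (\1_Omega q * rho q)%:E) = 1%E].

End Defs.

(** A ReLU network whose first-layer pre-activations are all negative outputs
    zero on every input, and zero is realised by a one-channel shallow network
    with output weight 0.  By non-degeneracy of the family, some parameter
    point c makes every first-layer pre-activation on the templates equal to
    -1; by continuity they stay negative on a small box around c, on which the
    density is also bounded below by half its value at c.  That box is a
    Borel event of positive probability. *)

From HB Require Import structures.
From mathcomp Require Import all_boot all_order all_algebra.
From mathcomp Require Import all_classical all_reals all_analysis.
From mathcomp Require Import ring lra.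
Import Order.TTheory GRing.Theory Num.Theory.
Local Open Scope ring_scope.
Local Open Scope classical_set_scope.

Set Implicit Arguments.
Unset Strict Implicit.
Unset Printing Implicit Defensive.

Section Box.
Variables (R : realType) (I : finType).

Definition box (c : I -> R) (dl : R) : set (I -> R) :=
  [set q | forall i, `|q i - c i| < dl].

Lemma in_bigsetI (s : seq I) (F : I -> set (I -> R)) q :
  (\big[setI/setT]_(i <- s) F i) q <-> (forall i, i \in s -> F i q).
Proof.
elim: s => [|a s IH]; first by rewrite big_nil.
rewrite big_cons; split.
  by move=> [Fa /IH Fs] i; rewrite inE => /orP[/eqP->|/Fs].
move=> Fas; split; first by apply: Fas; rewrite inE eqxx.
by apply/IH => i si; apply: Fas; rewrite inE si orbT.
Qed.

Lemma pmeasurable_box (c : I -> R) (dl : R) : pmeasurable (box c dl).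
Proof.
set G := \big[setU/set0]_(k < #|I|) preimage_set_system setT
   (fun (q : I -> R) => q (enum_val k)) measurable.
have -> : box c dl = \big[setI/setT]_(i <- enum I) [set q | `|q i - c i| < dl].
  apply/seteqP; split => q /=.
    by move=> qc; apply/in_bigsetI => i _; apply: qc.
  by move/in_bigsetI => qc i; apply: qc; rewrite mem_enum.
rewrite /pmeasurable /g_sigma_preimage -/G.
have [measT _ _ measI] := (sigma_algebraP (fun X _ => @subsetT _ X)).1
   (smallest_sigma_algebra setT G).
elim: (enum I) => [|a s IH]; first by rewrite big_nil.
rewrite big_cons; apply: measI => //.
apply: sub_sigma_algebra; rewrite /G (bigD1 (enum_rank a)) //=; left.
exists `]c a - dl, c a + dl[%classic; first exact: measurable_itv.
apply/seteqP; split => q /=; rewrite enum_rankK.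
  by move=> [_]; rewrite /preimage/= in_itv /= ltr_distl.
by move=> qa; split => //; rewrite /preimage/= in_itv /= -ltr_distl.
Qed.

End Box.

Section BoxProbability.
Variables (R : realType) (I : finType).
Local Open Scope ereal_scope.

(* No measurability is needed: the integral of a non-negative function is a
   supremum over the simple functions below it. *)
Lemma le_lebesgue_integral (g1 g2 : R -> \bar R) :
  (forall x, 0 <= g1 x) -> (forall x, g1 x <= g2 x) ->
  \int[@lebesgue_measure R]_x g1 x <= \int[@lebesgue_measure R]_x g2 x.
Proof.
move=> g1_ge0 g12.
rewrite !ge0_integralE //; last by move=> x _; exact: le_trans (g1_ge0 x) (g12 x).
rewrite !patch_setT.
by apply: ereal_sup_le => _ [h hg1 <-]; exists h => //= x; exact: le_trans (hg1 x) (g12 x).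
Qed.

Lemma iint_seq_ge0 (sq : seq I) (g : (I -> R) -> \bar R) q :
  (forall q, 0 <= g q) -> 0 <= iint_seq sq g q.
Proof.
move=> g_ge0; elim: sq q => [|i sq IH] q /=; first exact: g_ge0.
by apply: integral_ge0 => x _; exact: IH.
Qed.

Lemma le_iint_seq (sq : seq I) (g1 g2 : (I -> R) -> \bar R) q :
  (forall q, 0 <= g1 q) -> (forall q, g1 q <= g2 q) ->
  iint_seq sq g1 q <= iint_seq sq g2 q.
Proof.
move=> g1_ge0 g12; elim: sq q => [|i sq IH] q /=; first exact: g12.
by apply: le_lebesgue_integral => x; [exact: iint_seq_ge0 | exact: IH].
Qed.

Lemma lebesgue_integral_indic_itv (c dl K : R) : (0 < dl)%R -> (0 <= K)%R ->
  \int[@lebesgue_measure R]_x (K * \1_(`](c - dl)%R, (c + dl)%R[%classic) x)%:E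
  = (K * (dl *+ 2))%:E.
Proof.
move=> dl_gt0 K_ge0.
have := @integralZl_indic _ _ _ (@lebesgue_measure R) _ measurableT
  (fun _ => `](c - dl)%R, (c + dl)%R[%classic) K; rewrite /= => ->; last 2 first.
- by move=> /lt_le_trans /(_ K_ge0); rewrite ltxx.
- exact: measurable_itv.
rewrite integral_indic // setIT.
set len := (X in _ * X); have -> : len = (dl *+ 2)%:E.
  apply: etrans; first exact: lebesgue_measure_itv.
  rewrite /= ifT; last by rewrite lte_fin ltrD2l gtrN.
  by rewrite -EFinB mulr2n; congr (_%:E); ring.
by rewrite -EFinM.
Qed.

(* Integrating one coordinate at a time over the interval of width [2 dl]
   around [c i]; the coordinates outside [sq] are already in the box. *)
Lemma iint_seq_indic_box_ge (c : I -> R) (dl k : R) : (0 < dl)%R -> (0 < k)%R ->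
  forall sq, uniq sq -> forall q, (forall j, j \notin sq -> `|q j - c j| < dl)%R ->
  (k * (dl *+ 2) ^+ size sq)%:E <= iint_seq sq (fun q => (k * \1_(box c dl) q)%:E) q.
Proof.
move=> dl_gt0 k_gt0; elim=> [|i sq IH] /=.
  by move=> _ q qc; rewrite expr0 mulr1 indicE mem_set ?mulr1 // => i; apply: qc.
move=> /andP[i_sq sq_uniq] q qc.
pose K := (k * (dl *+ 2) ^+ size sq)%R.
have K_ge0 : (0 <= K)%R by rewrite mulr_ge0 ?exprn_ge0 ?mulrn_wge0 ?ltW.
pose J : set R := `](c i - dl)%R, (c i + dl)%R[%classic.
rewrite exprSr mulrA -/K -(lebesgue_integral_indic_itv (c i)) //.
apply: le_lebesgue_integral => x; first by rewrite lee_fin mulr_ge0.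
rewrite indicE; case: (boolP (x \in J)) => xJ; last first.
  by rewrite mulr0; apply: iint_seq_ge0 => q'; rewrite lee_fin mulr_ge0 // ltW.
rewrite mulr1; apply: IH => // j j_sq; rewrite /upd.
case: eqP => [->|/eqP ji]; first by move: xJ; rewrite /J inE /= in_itv /= ltr_distl.
by apply: qc; rewrite inE negb_or ji.
Qed.

Lemma dprob_box_gt0 (Om : set (I -> R)) (rho : (I -> R) -> R) (c : I -> R) (dl k : R) :
  (0 < dl)%R -> (0 < k)%R ->
  (forall q, box c dl q -> Om q /\ (k <= rho q)%R) ->
  0 < dprob Om rho (box c dl).
Proof.
move=> dl_gt0 k_gt0 boxP.
have lower := @iint_seq_indic_box_ge c dl k dl_gt0 k_gt0 (enum I) (enum_uniq _) (fun _ => 0%R).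
have {}lower := lower (fun j => ltac:(by rewrite mem_enum)).
apply: (lt_le_trans _ (le_trans lower _)).
  by rewrite lte_fin mulr_gt0 // exprn_gt0 // mulrn_wgt0.
apply: le_iint_seq => q; first by rewrite lee_fin mulr_ge0 // ltW.
rewrite !indicE; case: (boolP (q \in box c dl)) => qc; last first.
  have /negbTE -> : q \notin box c dl `&` Om by apply: contra qc => /set_mem[/mem_set].
  by rewrite mulr0 mul0r.
have [Omq k_rho] := boxP q (set_mem qc).
by rewrite (@mem_set _ (box c dl `&` Om) q) ?mulr1 ?mul1r ?lee_fin //; split=> //; exact: set_mem.
Qed.

End BoxProbability.

Section Nearby.
Variables (R : realType) (I : finType) (c : I -> R).

Definition nearby (Pr : (I -> R) -> Prop) :=
  exists2 dl : R, 0 < dl & forall q, box c dl q -> Pr q.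

Lemma nearby_sub (Pr Qr : (I -> R) -> Prop) :
  nearby Pr -> (forall q, Pr q -> Qr q) -> nearby Qr.
Proof. by move=> [dl dl_gt0 Prc] PQ; exists dl => // q /Prc /PQ. Qed.

Lemma nearby_and (Pr Qr : (I -> R) -> Prop) :
  nearby Pr -> nearby Qr -> nearby (fun q => Pr q /\ Qr q).
Proof.
move=> [d1 d1_gt0 Prc] [d2 d2_gt0 Qrc].
exists (Num.min d1 d2); first by rewrite lt_min d1_gt0 d2_gt0.
by move=> q qc; split; [apply: Prc | apply: Qrc] => i;
  apply: lt_le_trans (qc i) _; rewrite ge_min lexx ?orbT.
Qed.

Lemma nearby_forall (J : finType) (Pr : J -> (I -> R) -> Prop) :
  (forall j, nearby (Pr j)) -> nearby (fun q => forall j, Pr j q).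
Proof.
move=> Prc.
suff: nearby (fun q => forall j, j \in enum J -> Pr j q).
  by move/nearby_sub; apply => q Pq j; apply: Pq; rewrite mem_enum.
elim: (enum J) => [|a s IH]; first by exists 1.
apply: (nearby_sub (nearby_and (Prc a) IH)) => q [Pa Ps] j.
by rewrite inE => /orP[/eqP->|/Ps].
Qed.

Definition cont_at (Om : set (I -> R)) (F : (I -> R) -> R) :=
  forall e : R, 0 < e -> nearby (fun q => Om q -> `|F q - F c| < e).

Lemma cont_on_at (Om : set (I -> R)) (F : (I -> R) -> R) :
  cont_on Om F -> Om c -> cont_at Om F.
Proof.
move=> Fcont Omc e e_gt0; have [dl dl_gt0 Fc] := Fcont c Omc e e_gt0.
by exists dl => // q qc Omq; exact: Fc.
Qed.

Lemma cont_at_coord Om i : cont_at Om (fun q => q i).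
Proof. by move=> e e_gt0; exists e => // q qc _; exact: qc. Qed.

Lemma cont_atD Om F G : cont_at Om F -> cont_at Om G -> cont_at Om (F \+ G).
Proof.
move=> Fc Gc e e_gt0; have e2_gt0 : 0 < e / 2 by rewrite divr_gt0.
apply: (nearby_sub (nearby_and (Fc _ e2_gt0) (Gc _ e2_gt0))) => q [Fq Gq] Omq.
rewrite /= opprD addrACA (splitr e).
exact: le_lt_trans (ler_normD _ _) (ltrD (Fq Omq) (Gq Omq)).
Qed.

(* With [eta <= 1] and [eta (|F c| + |G c| + 1) <= e], the expansion
   [FG - F_c G_c = (F - F_c)(G - G_c) + F_c (G - G_c) + G_c (F - F_c)]
   is below [e] as soon as both deviations are below [eta]. *)
Lemma cont_atM Om F G : cont_at Om F -> cont_at Om G -> cont_at Om (F \* G).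
Proof.
move=> Fc Gc e e_gt0.
pose a := `|F c|; pose b := `|G c|.
have ab_gt0 : 0 < a + b + 1 by rewrite ltr_wpDl ?addr_ge0 ?normr_ge0.
pose eta := Num.min 1 (e / (a + b + 1)).
have eta_gt0 : 0 < eta by rewrite lt_min ltr01 divr_gt0.
have eta_le1 : eta <= 1 by rewrite ge_min lexx.
have eta_e : eta * (a + b + 1) <= e by rewrite -ler_pdivlMr // ge_min lexx orbT.
apply: (nearby_sub (nearby_and (Fc _ eta_gt0) (Gc _ eta_gt0))) => q [Fq Gq] Omq.
have {}Fq := Fq Omq; have {}Gq := Gq Omq.
have -> : F q * G q - F c * G c =
  (F q - F c) * (G q - G c) + F c * (G q - G c) + G c * (F q - F c) by ring.
apply: le_lt_trans (ler_normD _ _) _.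
apply: le_lt_trans (lerD (ler_normD _ _) (lexx _)) _.
rewrite !normrM -/a -/b.
have := normr_ge0 (F q - F c); have := normr_ge0 (G q - G c).
have : 0 <= a by exact: normr_ge0.
have : 0 <= b by exact: normr_ge0.
move: Fq Gq eta_le1 eta_e eta_gt0.
set u := `|F q - F c|; set v := `|G q - G c|.
nra.
Qed.

Lemma cont_at_sum Om (J : Type) (s : seq J) (F : J -> (I -> R) -> R) :
  (forall j, cont_at Om (F j)) -> cont_at Om (fun q => \sum_(j <- s) F j q).
Proof.
move=> Fc; elim: s => [|a s IH] e e_gt0.
  by exists 1 => // q _ _; rewrite !big_nil subrr normr0.
by apply: (nearby_sub (cont_atD (Fc a) IH e_gt0)) => q; rewrite !big_cons.
Qed.

Lemma cont_at_nearby_lt Om F (t : R) :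
  cont_at Om F -> F c < t -> nearby (fun q => Om q -> F q < t).
Proof.
move=> Fc Fct; have := Fc (t - F c); rewrite subr_gt0 => /(_ Fct).
move/nearby_sub; apply=> q Fq /Fq; rewrite ltr_distl => /andP[_]; lra.
Qed.

Lemma cont_at_nearby_gt Om F (t : R) :
  cont_at Om F -> t < F c -> nearby (fun q => Om q -> t < F q).
Proof.
move=> Fc tFc; have := Fc (F c - t); rewrite subr_gt0 => /(_ tFc).
move/nearby_sub; apply=> q Fq /Fq; rewrite ltr_distl => /andP[]; lra.
Qed.

End Nearby.

Lemma unitmx_solve (F : fieldType) (n : nat) (A : 'M[F]_n) (v : 'I_n -> F) :
  A \in unitmx -> exists w : 'I_n -> F, forall i, \sum_(k < n) w k * A i k = v i.
Proof.
move=> A_unit; pose vc : 'cV[F]_n := \col_i v i.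
exists (fun k => (invmx A *m vc) k ord0) => i.
have := congr1 (fun B : 'cV[F]_n => B i ord0) (mulKVmx A_unit vc).
rewrite !mxE => <-; by apply: eq_bigr => k _; rewrite mulrC.
Qed.

Section DeepNet.
Variables (R : realType) (M s P : nat) (r : nat -> nat).
Variables (f : ('I_P -> R) -> ('I_s -> R) -> R) (th : 'I_M -> ('I_P -> R)).
Variables (a0 : nat -> nat -> nat -> R) (a : nat -> nat -> nat -> nat -> R).
Variable X : nat -> ('I_s -> R).
Hypothesis layer0_eq0 : forall j g, deep_u r f th a0 a X 0 j g = 0.

Lemma deep_u_eq0 l j g : deep_u r f th a0 a X l j g = 0.
Proof.
elim: l j g => [|l IH] j g; first exact: layer0_eq0.
by rewrite /= big1 ?/relu ?maxxx // => al _; rewrite !IH maxxx mulr0.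
Qed.

Lemma deep_h_eq0 L aL y : deep_h L r f th a0 a aL y X = 0.
Proof. by rewrite /deep_h big1 // => al _; rewrite !deep_u_eq0 maxxx mulr0. Qed.

End DeepNet.

Section FirstLayer.
Variables (R : realType) (s P M N L Y : nat) (r : nat -> nat).
Variables (Theta : set ('I_P -> R)) (f : ('I_P -> R) -> ('I_s -> R) -> R).
Variable xs : 'I_M -> ('I_s -> R).

Local Notation param := (PIdx M P N L Y r -> R).

Definition theta_admissible : set param := [set p | forall d, Theta (dec_theta p d)].

Definition preact0 (p : param) (j : 'I_N) (g : 'I_(r 0)) (i : 'I_M) : R :=
  \sum_(d < M) p (inl (inl (inr (j, g, d)))) * f (dec_theta p d) (xs i).

Lemma deep_h_grid_eq0 (p : param) y (ds : 'I_N -> 'I_M) :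
  (forall j g i, preact0 p j g i <= 0) ->
  deep_h L r f (dec_theta p) (dec_a0 p) (dec_a p) (dec_aL p) y (grid_input xs ds) = 0.
Proof.
move=> preact_le0; apply: deep_h_eq0 => j g /=.
rewrite /dec_a0 /grid_input.
case: (@insubP _ _ 'I_N j) => [j' _ _|_]; last first.
  by rewrite big1 ?/relu ?maxxx // => d _; rewrite mul0r.
case: (@insubP _ _ 'I_(r 0) g) => [g' _ _|_]; last first.
  by rewrite big1 ?/relu ?maxxx // => d _; rewrite mul0r.
under eq_bigr => d _ do rewrite valK.
exact/max_idPl/preact_le0.
Qed.

Lemma nearby_theta_admissible (c : param) :
  open_set Theta -> theta_admissible c -> nearby c theta_admissible.
Proof.
move=> Theta_open c_adm; apply: nearby_forall => d.
have [dl dl_gt0 ThetaB] := Theta_open _ (c_adm d).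
by exists dl => // q qc; apply: ThetaB => k; exact: (qc (inl (inl (inl (d, k))))).
Qed.

Lemma cont_at_preact0 (c : param) j g i :
  family_continuous Theta f -> theta_admissible c ->
  cont_at c theta_admissible (fun p => preact0 p j g i).
Proof.
move=> f_cont c_adm; apply: cont_at_sum => d; apply: cont_atM; first exact: cont_at_coord.
move=> e e_gt0; have [dl dl_gt0 fc] := f_cont _ (xs i) (c_adm d) e e_gt0.
exists dl => // q qc q_adm; apply: fc => [|k|k]; first exact: q_adm.
- exact: (qc (inl (inl (inl (d, k))))).
- by rewrite subrr normr0.
Qed.

(* Take representation parameters making the template matrix non-singular and
   solve for layer-0 weights (the same for every position and channel). *)
Lemma exists_preact0_eqN1 :
  family_nondegenerate Theta f -> injective xs ->
  exists2 c : param, theta_admissible c & forall j g i, preact0 c j g i = -1.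
Proof.
move=> f_nondeg xs_inj; have [th [th_Theta det_neq0]] := f_nondeg M xs xs_inj.
have A_unit : \matrix_(i, k) f (th k) (xs i) \in unitmx by rewrite unitmxE unitfE.
have [w w_sol] := unitmx_solve (fun _ => -1) A_unit.
pose c : param := fun idx =>
  match idx with
  | inl (inl (inl (d, k))) => th d k
  | inl (inl (inr (_, d))) => w d
  | _ => 0
  end.
exists c => // j g i; rewrite -(w_sol i).
by apply: eq_bigr => d _; rewrite mxE.
Qed.

End FirstLayer.

Theorem claim12 (R : realType) (s P : nat) (Theta : set ('I_P -> R))
    (f : ('I_P -> R) -> ('I_s -> R) -> R)
    (L : nat) (r : nat -> nat) (Y : nat) (y : 'I_Y) (M : nat)
    (xs : 'I_M -> ('I_s -> R))
    (rho : (PIdx M P (2 ^ L) L Y r -> R) -> R) :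
  open_set Theta ->
  family_continuous Theta f ->
  family_nondegenerate Theta f ->
  (1 <= L)%N ->
  (forall l, (l < L)%N -> (0 < r l)%N) ->
  injective xs ->
  cont_pos_density [set p | forall d, Theta (dec_theta p d)] rho ->
  exists A : set (PIdx M P (2 ^ L) L Y r -> R),
    [/\ pmeasurable A,
        A `<=` [set p | exists (th : 'I_M -> ('I_P -> R)) (c : R)
                               (b : 'I_(2 ^ L) -> 'I_M -> R),
                  (forall d, Theta (th d)) /\
                  forall ds : 'I_(2 ^ L) -> 'I_M,
                    shallow1_h f th c b (grid_input xs ds) =
                    deep_h L r f (dec_theta p) (dec_a0 p) (dec_a p) (dec_aL p)
                      y (grid_input xs ds)] &
        (0 < dprob [set p | forall d, Theta (dec_theta p d)] rho A)%E].
Proof.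
move=> Theta_open f_cont f_nondeg _ _ xs_inj [rho_pos rho_cont _].
have [c c_adm preact_c] := exists_preact0_eqN1 (2 ^ L) L Y r f_nondeg xs_inj.
have rho_c_gt0 := rho_pos c c_adm.
have rho_c2 : 0 < rho c / 2 by rewrite divr_gt0.
have preact_neg j g i :
    nearby c (fun p => theta_admissible Theta p -> preact0 f xs p j g i < 0).
  by apply: cont_at_nearby_lt; [exact: cont_at_preact0 | rewrite preact_c ltrN10].
have rho_big : nearby c (fun p => theta_admissible Theta p -> rho c / 2 < rho p).
  by apply: cont_at_nearby_gt; [exact: cont_on_at | lra].
have [dl dl_gt0 near_c] := nearby_and (nearby_theta_admissible Theta_open c_adm)
  (nearby_and rho_big (nearby_forall (fun j => nearby_forall (fun g =>
     nearby_forall (preact_neg j g))))).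
exists (box c dl); split; first exact: pmeasurable_box.
- move=> p /near_c [p_adm [_ preact_p]]; exists (dec_theta c), 0, (fun _ _ => 0).
  split=> [//|ds]; rewrite /shallow1_h mul0r deep_h_grid_eq0 // => j g i.
  exact/ltW/preact_p.
- apply: (dprob_box_gt0 dl_gt0 rho_c2) => p /near_c [p_adm [rho_p _]].
  by split=> //; exact/ltW/rho_p.
Qed.
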